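(* For all programs $p$ and $q$, environments $\sigma,\sigma'$ and time instants $t,t',s\in\mathbb{R}_{\ge0}$: if $(p,\sigma,t)\to(q,\sigma',t')$ then $(p,\sigma,t+s)\to(q,\sigma',t'+s)$; and if $(p,\sigma,t)\to(\mathit{skip},\sigma',t')$ then $(p,\sigma,t+s)\to(\mathit{skip},\sigma',t'+s)$.
   Context: Syntax. Fix variables $\mathcal{X}=\{x_1,\dots,x_n\}$. Linear terms: $u::= r\mid r\cdot x\mid u_1+u_2$ ($r\in\mathbb{R}$, $x\in\mathcal{X}$). Atomic programs: $x:=u$ and $\bar x'=\bar u\ \mathtt{for}\ u$. Programs: $p::= a\mid p;q\mid \mathtt{if}\ b\ \mathtt{then}\ p\ \mathtt{else}\ q\mid \mathtt{while}\ b\ \mathtt{do}\ p$, $b$ in the free Boolean algebra generated by atoms $u_1\le u_2$, $u_1\ge u_2$. Environments $\sigma\colon\mathcal{X}\to\mathbb{R}$; $u\sigma$, $b\sigma$ evaluation; $\sigma\triangledown[\bar v/\bar x]$ update; $\phi_\sigma$ the solution of $\bar x'=\bar u$ with initial value $(\sigma(x_i))_i$. Small-step rules on triples $(p,\sigma,t)$ ($p$ a program or $\mathit{skip}/\mathit{stop}$, $t\ge0$): $(x:=u,\sigma,t)\to(\mathit{skip},\sigma\triangledown[u\sigma/x],t)$; $(\bar x'=\bar u\ \mathtt{for}\ u,\sigma,t)\to(\mathit{stop},\sigma\triangledown[\phi_\sigma(t)/\bar x],0)$ if $t<u\sigma$; $(\bar x'=\bar u\ \mathtt{for}\ u,\sigma,t)\to(\mathit{skip},\sigma\triangledown[\phi_\sigma(u\sigma)/\bar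 x],t-u\sigma)$ if $t\ge u\sigma$; $(\mathtt{if}\ b\ \mathtt{then}\ p\ \mathtt{else}\ q,\sigma,t)\to(p,\sigma,t)$ if $b\sigma=\top$, $\to(q,\sigma,t)$ if $b\sigma=\bot$; $(\mathtt{while}\ b\ \mathtt{do}\ p,\sigma,t)\to(p;\mathtt{while}\ b\ \mathtt{do}\ p,\sigma,t)$ if $b\sigma=\top$, $\to(\mathit{skip},\sigma,t)$ if $b\sigma=\bot$; from $(p,\sigma,t)\to(\mathit{stop},\sigma',t')$ infer $(p;q,\sigma,t)\to(\mathit{stop},\sigma',t')$; from $(p,\sigma,t)\to(\mathit{skip},\sigma',t')$ infer $(p;q,\sigma,t)\to(q,\sigma',t')$; from $(p,\sigma,t)\to(p',\sigma',t')$ with $p'\notin\{\mathit{skip},\mathit{stop}\}$ infer $(p;q,\sigma,t)\to(p';q,\sigma',t')$. *)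

From Stdlib Require Import Reals List.
From Stdlib Require Fin.
From Coquelicot Require Import Coquelicot.
Open Scope R_scope.

Definition var (n : nat) := Fin.t n.
Definition env (n : nat) := var n -> R.

Inductive lterm (n : nat) : Type :=
| LConst : R -> lterm n
| LScal  : R -> var n -> lterm n
| LAdd   : lterm n -> lterm n -> lterm n.
Arguments LConst {n}. Arguments LScal {n}. Arguments LAdd {n}.

Fixpoint leval {n} (u : lterm n) (s : env n) : R :=
  match u with
  | LConst r => r
  | LScal r x => r * s x
  | LAdd u1 u2 => leval u1 s + leval u2 s
  end.

Inductive bexp (n : nat) : Type :=
| BTrue : bexp n
| BFalse : bexp n
| BLe : lterm n -> lterm n -> bexp n
| BGe : lterm n -> lterm n -> bexp n
| BNot : bexp n -> bexp n
| BAnd : bexp n -> bexp n -> bexp n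
| BOr : bexp n -> bexp n -> bexp n.
Arguments BTrue {n}. Arguments BFalse {n}. Arguments BLe {n}. Arguments BGe {n}.
Arguments BNot {n}. Arguments BAnd {n}. Arguments BOr {n}.

Fixpoint beval {n} (b : bexp n) (s : env n) : bool :=
  match b with
  | BTrue => true
  | BFalse => false
  | BLe u1 u2 => if Rle_dec (leval u1 s) (leval u2 s) then true else false
  | BGe u1 u2 => if Rle_dec (leval u2 s) (leval u1 s) then true else false
  | BNot b => negb (beval b s)
  | BAnd b1 b2 => andb (beval b1 s) (beval b2 s)
  | BOr b1 b2 => orb (beval b1 s) (beval b2 s)
  end.

(* Programs.  [PODE xs u] is  x̄' = ū for u, with xs the list of pairs (x_i, u_i). *)
Inductive prog (n : nat) : Type :=
| PAssign : var n -> lterm n -> prog n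
| PODE : list (var n * lterm n) -> lterm n -> prog n
| PSeq : prog n -> prog n -> prog n
| PIf : bexp n -> prog n -> prog n -> prog n
| PWhile : bexp n -> prog n -> prog n.
Arguments PAssign {n}. Arguments PODE {n}. Arguments PSeq {n}.
Arguments PIf {n}. Arguments PWhile {n}.

Inductive cmd (n : nat) : Type :=
| CProg : prog n -> cmd n
| CSkip : cmd n
| CStop : cmd n.
Arguments CProg {n}. Arguments CSkip {n}. Arguments CStop {n}.

Definition upd {n} (s : env n) (x : var n) (v : R) : env n :=
  fun y => if Fin.eq_dec y x then v else s y.

(* phi is a (global) solution of  x̄' = ū  with initial value sigma, viewed
   as a curve of environments: phi 0 = sigma, variables outside x̄ stay
   constant (so phi t = sigma ∇ [phi_sigma(t)/x̄]), and each x_i has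
   derivative u_i evaluated along the curve.  Linear systems have a unique
   such solution. *)
Definition is_sol {n} (xs : list (var n * lterm n)) (s : env n)
  (phi : R -> env n) : Prop :=
  phi 0 = s /\
  (forall tau y, ~ In y (map fst xs) -> phi tau y = s y) /\
  (forall tau x u, In (x, u) xs ->
     is_derive (fun r => phi r x) tau (leval u (phi tau))).

Inductive step {n} : cmd n * env n * R -> cmd n * env n * R -> Prop :=
| st_assign : forall x u s t,
    step (CProg (PAssign x u), s, t) (CSkip, upd s x (leval u s), t)
| st_ode_stop : forall xs u s t phi,
    is_sol xs s phi -> t < leval u s ->
    step (CProg (PODE xs u), s, t) (CStop, phi t, 0)
| st_ode_skip : forall xs u s t phi,
    is_sol xs s phi -> leval u s <= t ->
    step (CProg (PODE xs u), s, t) (CSkip, phi (leval u s), t - leval u s)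
| st_if_true : forall b p q s t, beval b s = true ->
    step (CProg (PIf b p q), s, t) (CProg p, s, t)
| st_if_false : forall b p q s t, beval b s = false ->
    step (CProg (PIf b p q), s, t) (CProg q, s, t)
| st_while_true : forall b p s t, beval b s = true ->
    step (CProg (PWhile b p), s, t) (CProg (PSeq p (PWhile b p)), s, t)
| st_while_false : forall b p s t, beval b s = false ->
    step (CProg (PWhile b p), s, t) (CSkip, s, t)
| st_seq_stop : forall p q s t s' t',
    step (CProg p, s, t) (CStop, s', t') ->
    step (CProg (PSeq p q), s, t) (CStop, s', t')
| st_seq_skip : forall p q s t s' t',
    step (CProg p, s, t) (CSkip, s', t') ->
    step (CProg (PSeq p q), s, t) (CProg q, s', t')
| st_seq_prog : forall p p' q s t s' t',
    step (CProg p, s, t) (CProg p', s', t') ->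
    step (CProg (PSeq p q), s, t) (CProg (PSeq p' q), s', t').

From Stdlib Require Import Reals Lra.
Open Scope R_scope.

(* Stop configurations are excluded: an interrupted ODE leaves residual time 0,
   not [t' + d].  Nonnegativity of [d] keeps the guard [leval u s <= t] of a
   completed ODE valid. *)
Lemma step_shift_time n (d : R) (k k' : cmd n) (s s' : env n) (t t' : R) :
  0 <= d -> k' <> CStop ->
  step (k, s, t) (k', s', t') -> step (k, s, t + d) (k', s', t' + d).
Proof.
  intros Hd Hk' H.
  remember (k, s, t) as c eqn:Ec; remember (k', s', t') as c' eqn:Ec'.
  revert k s t k' s' t' Ec Ec' Hk'.
  induction H; intros k0 s0 t0 k0' s0' t0' Ec Ec' Hk';
    injection Ec; injection Ec'; intros; subst; try congruence.
  - apply st_assign.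
  - replace (t0 - leval u s0 + d) with (t0 + d - leval u s0) by lra.
    apply st_ode_skip; [assumption | lra].
  - now apply st_if_true.
  - now apply st_if_false.
  - now apply st_while_true.
  - now apply st_while_false.
  - apply st_seq_skip; eapply IHstep; eauto; discriminate.
  - apply st_seq_prog; eapply IHstep; eauto; discriminate.
Qed.

Theorem proposition1 (n : nat) (p q : prog n) (s s' : env n) (t t' u : R) :
  0 <= t -> 0 <= t' -> 0 <= u ->
  (step (CProg p, s, t) (CProg q, s', t') ->
   step (CProg p, s, t + u) (CProg q, s', t' + u)) /\
  (step (CProg p, s, t) (CSkip, s', t') ->
   step (CProg p, s, t + u) (CSkip, s', t' + u)).
Proof.
  intros _ _ Hu.
  split; apply step_shift_time; (assumption || discriminate).
Qed.
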